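(* Let $(G_k,y)$ be a mass-action system with exactly one terminal strong component ($t=1$), considered as a single (independent) subnetwork, and assume $\ker(YR_k)\cap\mathbb{R}^{V_s}_{>0}\neq\emptyset$. Then (1) $K=L=S$, and (2) $d=\delta+t'-1$.
   Context: A reaction network $(G,y)$: finite simple digraph $G=(V,E)$ and map $y:V\to\mathbb{R}^n$; rate constants $k\in\mathbb{R}^E_{>0}$. $V_s$: source vertices (with an outgoing edge). $Y\in\mathbb{R}^{n\times V}$ has columns $y(i)$. The rectangular Laplacian $R_k\in\mathbb{R}^{V\times V_s}$ has $(R_k)_{i,j}=k_{j\to i}$ if $(j\to i)\in E$, $(R_k)_{j,j}=-\sum_{(j\to i')\in E}k_{j\to i'}$, $0$ otherwise. $S=\operatorname{span}\{y(i')-y(i):(i\to i')\in E\}$, $K=\operatorname{im}(YR_k)$, $L=\operatorname{span}\{y(i)-y(i'):i,i'\in V_s\}$. A terminal strong component is a strongly connected component with no edge leaving it; $t$ is their number and $t'$ the number of those with at least two vertices. $l$ is the number of weakly connected components; deficiency $\delta=|V|-l-\dim S$; dependency $d=|V_s|-1-\dim L$. *)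

From HB Require Import structures.
From mathcomp Require Import all_boot all_order all_algebra.
Set Implicit Arguments. Unset Strict Implicit. Unset Printing Implicit Defensive.
Import Order.TTheory GRing.Theory Num.Theory.
Local Open Scope ring_scope.

(* A reaction network: vertex set V (finType), edge relation E : rel V
   (simple digraph: irreflexive, at most one edge i -> i'), complex map
   y : V -> 'rV[R]_n, rate constants k : V -> V -> R (k i i' is the rate of
   the edge i -> i', only used on edges). *)

Section RN.
Variables (R : fieldType) (V : finType) (n : nat).
Variables (E : rel V) (y : V -> 'rV[R]_n) (k : V -> V -> R).

Definition Vs : {set V} := [set i | [exists j, E i j]].

(* rectangular Laplacian entry (R_k)_{i,j}, i in V, j in V_s *)
Definition Rk (i j : V) : R :=
  if E j i then k j i
  else if i == j then - \sum_(i' | E j i') k j i' else 0.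

Definition YRk_col (j : V) : 'rV[R]_n := \sum_(i : V) Rk i j *: y i.

Definition Sspace : {vspace 'rV[R]_n} :=
  <<[seq y p.2 - y p.1 | p <- enum [pred p : V * V | E p.1 p.2]]>>%VS.

Definition Kspace : {vspace 'rV[R]_n} :=
  <<[seq YRk_col j | j <- enum Vs]>>%VS.

Definition Lspace : {vspace 'rV[R]_n} :=
  <<[seq y p.1 - y p.2 | p <- enum [pred p : V * V | (p.1 \in Vs) && (p.2 \in Vs)]]>>%VS.

Definition symE : rel V := fun i j => E i j || E j i.
Definition nlink : nat := n_comp symE predT.

Definition scc (x : V) : {set V} := [set z | connect E x z && connect E z x].
Definition terminal (C : {set V}) : bool :=
  [forall z in C, forall w, E z w ==> (w \in C)].
Definition tscs : {set {set V}} := [set scc x | x in [pred x | terminal (scc x)]].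
Definition tnum : nat := #|tscs|.
Definition tnum' : nat := #|[set C in tscs | (1 < #|C|)%N]|.

Definition deficiency : int := (#|V|%:Z - (nlink)%:Z - (\dim Sspace)%:Z)%R.
Definition dependency : int := (#|Vs|%:Z - 1 - (\dim Lspace)%:Z)%R.

End RN.

From HB Require Import structures.
From mathcomp Require Import all_boot all_order all_algebra.
From mathcomp Require Import zify.
Set Implicit Arguments. Unset Strict Implicit. Unset Printing Implicit Defensive.
Import Order.TTheory GRing.Theory Num.Theory.
Local Open Scope ring_scope.

(* With t = 1 every vertex reaches a vertex x0 of the unique terminal strong
   component, and a non-source vertex, being a terminal component on its own,
   must be x0.  Chaining edges along paths to x0 puts every y b - y a in S,
   whence K, L <= S.  For S <= K: a vector annihilating the rows of the
   Laplacian is harmonic, hence constant by the maximum principle along paths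
   to x0, so the Laplacian's row space contains every zero-sum vector, such as
   e_b - e_a.  For S <= L only an edge a -> x0 into a non-source x0 matters:
   R_k c is positive at x0 and Y R_k c = 0, which expresses y x0 - y a through
   differences of sources.  Part (2) is a count: l = 1, and either x0 is a
   source, so V_s = V and t' = 1, or V_s = V \ {x0} and t' = 0. *)

Section Graph.
Variables (V : finType) (E : rel V).

Lemma in_Vs j : (j \in Vs E) = [exists i, E j i].
Proof. by rewrite inE. Qed.

Lemma connect_nonsource b z : b \notin Vs E -> connect E b z -> z = b.
Proof.
rewrite in_Vs => /existsPn nb /connectP [[|c p] /= Hp ->] //.
by move: Hp => /andP[]; rewrite (negbTE (nb c)).
Qed.

Lemma scc_refl x : x \in scc E x.
Proof. by rewrite inE connect0. Qed.

Lemma scc_nonsource b : b \notin Vs E -> scc E b = [set b].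
Proof.
move=> Hb; apply/setP => z; rewrite !inE.
apply/idP/idP => [/andP [Hbz _] | /eqP ->]; last by rewrite connect0.
by rewrite (connect_nonsource Hb Hbz).
Qed.

Lemma terminal_scc_nonsource b : b \notin Vs E -> terminal E (scc E b).
Proof.
move=> Hb; rewrite scc_nonsource //; apply/forall_inP => z; rewrite inE => /eqP ->.
apply/forallP => w; apply/implyP => Ebw.
by move: Hb; rewrite in_Vs => /existsPn /(_ w); rewrite Ebw.
Qed.

(* A vertex z reachable from x whose forward closure is minimal spans a
   terminal strong component. *)
Lemma connect_terminal_scc x : exists2 z, connect E x z & terminal E (scc E z).
Proof.
pose reach z := #|[set w | connect E z w]|.
have [z Hxz Hmin] := arg_minnP reach (connect0 E x).
exists z => //; apply/forall_inP => w; rewrite inE => /andP [Hzw _].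
apply/forallP => w'; apply/implyP => Eww'.
have Hzw' : connect E z w' by apply: connect_trans Hzw (connect1 Eww').
rewrite inE Hzw' /=.
have Hsub : [set v | connect E w' v] \subset [set v | connect E z v].
  by apply/subsetP => v; rewrite !inE; apply: connect_trans.
have /eqP Heq : [set v | connect E w' v] == [set v | connect E z v].
  by rewrite eqEcard Hsub Hmin // (connect_trans Hxz Hzw').
have : z \in [set v | connect E w' v] by rewrite Heq inE connect0.
by rewrite inE.
Qed.

Lemma tnum1_root : tnum E = 1%N ->
  exists x0, [/\ forall x, connect E x x0, tscs E = [set scc E x0]
               & terminal E (scc E x0)].
Proof.
move=> /eqP/cards1P [C0 HC0].
have : C0 \in tscs E by rewrite HC0 set11.
case/imsetP => x0; rewrite inE => Hterm HC; subst C0.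
exists x0; split => // x.
have [z Hxz Hz] := connect_terminal_scc x.
have : scc E z \in tscs E by apply/imsetP; exists z; rewrite ?inE.
rewrite HC0 inE => /eqP Hzz.
have : x0 \in scc E z by rewrite Hzz scc_refl.
by rewrite inE => /andP [Hzx0 _]; apply: connect_trans Hxz Hzx0.
Qed.

Section Rooted.
Variable x0 : V.
Hypothesis reach_x0 : forall x, connect E x x0.
Hypothesis tscs_x0 : tscs E = [set scc E x0].
Hypothesis terminal_x0 : terminal E (scc E x0).

Lemma nonsource_root b : b \notin Vs E -> b = x0.
Proof.
move=> Hb; have : scc E b \in tscs E.
  by apply/imsetP; exists b; rewrite // inE terminal_scc_nonsource.
rewrite tscs_x0 inE scc_nonsource // => /eqP Hx0.
by have := scc_refl x0; rewrite -Hx0 inE => /eqP.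
Qed.

Lemma nlink_rooted : nlink E = 1%N.
Proof.
have Hsym : connect_sym (symE E).
  by apply: sym_connect_sym => a b; rewrite /symE orbC.
rewrite /nlink -(n_comp_connect Hsym x0).
apply: eq_n_comp_r => x; rewrite !inE /= Hsym.
apply/esym; apply: (connect_sub _ (reach_x0 x)) => a b Eab.
by apply: connect1; rewrite /symE Eab.
Qed.

Lemma tnum'_rooted : tnum' E = (1 < #|scc E x0|)%N.
Proof.
rewrite /tnum' tscs_x0; case H: (1 < #|scc E x0|)%N => /=.
  rewrite (_ : [set C in _ | _] = [set scc E x0]) ?cards1 //.
  by apply/setP => C; rewrite !inE; case: eqP => // ->; rewrite H.
apply/eqP; rewrite cards_eq0; apply/eqP/setP => C.
by rewrite !inE; case: eqP => // ->; rewrite H.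
Qed.

Hypothesis E_irrefl : forall i, ~~ E i i.

Lemma card_Vs_rooted : (#|Vs E| + 1 = #|V| + tnum' E)%N.
Proof.
rewrite tnum'_rooted; have [Hx0 | Hx0] := boolP (x0 \in Vs E).
  have -> : Vs E = [set: V].
    apply/setP => v; rewrite in_setT.
    by apply: contraLR Hx0 => Hv; rewrite -(nonsource_root Hv).
  have [z Ez] : exists z, E x0 z by apply/existsP; rewrite -in_Vs.
  have Hz : z \in scc E x0.
    by move/forall_inP/(_ x0 (scc_refl x0))/forallP/(_ z): terminal_x0; rewrite Ez.
  suff -> : (1 < #|scc E x0|)%N by rewrite cardsT.
  apply/card_gt1P; exists x0, z; split; rewrite ?scc_refl //.
  by apply: contraTneq Ez => <-; apply: E_irrefl.
have -> : Vs E = [set~ x0].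
  apply/setP => v; rewrite in_setC1.
  by apply/idP/idP => [|Hv]; [apply: contraTneq => -> | apply: contraR Hv => /nonsource_root ->].
rewrite scc_nonsource // cards1 cardsC1.
have : (0 < #|V|)%N by apply/card_gt0P; exists x0.
by rewrite /=; lia.
Qed.

End Rooted.
End Graph.

Section Laplacian.
Variables (R : fieldType) (V : finType) (n : nat).
Variables (E : rel V) (y : V -> 'rV[R]_n) (k : V -> V -> R).
Hypothesis E_irrefl : forall i, ~~ E i i.

Lemma RkE i j : Rk E k i j =
  (if E j i then k j i else 0) - (i == j)%:R * \sum_(i' | E j i') k j i'.
Proof.
rewrite /Rk; case: ifP => Eji.
  case: eqP => [eij|_]; last by rewrite mul0r subr0.
  by subst i; move: (E_irrefl j); rewrite Eji.
by case: eqP => _; rewrite ?mul1r ?mul0r sub0r ?oppr0.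
Qed.

Lemma sum_Rk_mul (z : V -> R) j : \sum_i Rk E k i j * z i =
  \sum_(i | E j i) k j i * z i - (\sum_(i | E j i) k j i) * z j.
Proof.
under eq_bigr do rewrite RkE mulrBl (fun_if (fun c => c * z _)) mul0r.
rewrite sumrB -big_mkcond; congr (_ - _).
rewrite (bigD1 j) //= eqxx mul1r [X in _ + X]big1 ?addr0 // => i /negbTE ->.
by rewrite !mul0r.
Qed.

Lemma sum_Rk j : \sum_i Rk E k i j = 0.
Proof.
have := sum_Rk_mul (fun=> 1) j; under eq_bigr do rewrite mulr1.
by rewrite mulr1 -big_distrl /= mulr1 subrr.
Qed.

Lemma YRk_colE j : YRk_col E y k j = \sum_(i | E j i) k j i *: (y i - y j).
Proof.
rewrite /YRk_col.
under eq_bigr do rewrite RkE scalerBl (fun_if (fun c => c *: y _)) scale0r.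
rewrite sumrB -big_mkcond.
under [RHS]eq_bigr do rewrite scalerBr; rewrite sumrB -scaler_suml; congr (_ - _).
rewrite (bigD1 j) //= eqxx mul1r [X in _ + X]big1 ?addr0 // => i /negbTE ->.
by rewrite mul0r scale0r.
Qed.

Lemma YRk_col_nonsource j : j \notin Vs E -> YRk_col E y k j = 0.
Proof.
rewrite in_Vs => /existsPn nj; rewrite /YRk_col big1 // => i _.
rewrite /Rk (negbTE (nj i)) big_pred0 => [|i']; last exact: negbTE.
by rewrite oppr0 if_same scale0r.
Qed.

Lemma edge_in_Sspace a b : E a b -> y b - y a \in Sspace E y.
Proof. by move=> Eab; apply: memv_span; apply/mapP; exists (a, b); rewrite ?mem_enum. Qed.

Lemma YRk_col_in_Sspace j : YRk_col E y k j \in Sspace E y.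
Proof.
by rewrite YRk_colE; apply: memv_suml => i Eji; rewrite memvZ // edge_in_Sspace.
Qed.

Lemma YRk_col_in_Kspace j : YRk_col E y k j \in Kspace E y k.
Proof.
have [Hj | Hj] := boolP (j \in Vs E); last by rewrite YRk_col_nonsource ?mem0v.
by apply: memv_span; apply/mapP; exists j; rewrite ?mem_enum.
Qed.

Lemma diff_in_Lspace i j : i \in Vs E -> j \in Vs E -> y i - y j \in Lspace E y.
Proof.
by move=> Hi Hj; apply: memv_span; apply/mapP; exists (i, j); rewrite // mem_enum; apply/andP.
Qed.

Lemma diff_in_Sspace_rooted x0 : (forall x, connect E x x0) ->
  forall a b, y b - y a \in Sspace E y.
Proof.
move=> reach_x0.
suff Hx0 a : y x0 - y a \in Sspace E y.
  move=> a b; have -> : y b - y a = (y x0 - y a) - (y x0 - y b).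
    by rewrite opprB [RHS]addrC addrA subrK.
  exact: memvB.
have /connectP [p Hp ->] := reach_x0 a.
elim: p a Hp => [|c p IH] a /=; first by rewrite subrr mem0v.
case/andP => Eac /IH /(memvD (edge_in_Sspace Eac)).
by rewrite addrC addrA subrK.
Qed.

End Laplacian.

Section Harmonic.
Variables (R : realFieldType) (V : finType) (E : rel V) (k : V -> V -> R).
Hypothesis E_irrefl : forall i, ~~ E i i.
Hypothesis k_pos : forall i j, E i j -> 0 < k i j.

Definition harmonic (z : V -> R) := forall j, \sum_i Rk E k i j * z i = 0.

Lemma harmonicN z : harmonic z -> harmonic (fun i => - z i).
Proof. by move=> Hz j; under eq_bigr do rewrite mulrN; rewrite sumrN Hz oppr0. Qed.

Lemma harmonic_max_edge z u v :
  harmonic z -> (forall w, z w <= z u) -> E u v -> z v = z u.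
Proof.
move=> Hz Hmax Euv.
have Hge w : E u w -> 0 <= k u w * (z u - z w).
  by move=> Euw; rewrite mulr_ge0 ?subr_ge0 // ltW ?k_pos.
have H0 : \sum_(w | E u w) k u w * (z u - z w) = 0.
  under eq_bigr do rewrite mulrBr.
  by rewrite sumrB -mulr_suml -opprB -(sum_Rk_mul k E_irrefl) Hz oppr0.
have /eqP := psumr_eq0P Hge H0 Euv.
by rewrite mulf_eq0 (gt_eqF (k_pos Euv)) subr_eq0 => /eqP.
Qed.

Lemma harmonic_max_connect z u w :
  harmonic z -> (forall v, z v <= z u) -> connect E u w -> z w = z u.
Proof.
move=> Hz + /connectP [p Hp ->].
elim: p u Hp => [|c p IH] u //= /andP [Euc Hp] Hmax.
have Hc := harmonic_max_edge Hz Hmax Euc.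
by rewrite (IH c) // => v; rewrite Hc.
Qed.

Section Rooted.
Variable x0 : V.
Hypothesis reach_x0 : forall x, connect E x x0.

Lemma harmonic_rooted_max z : harmonic z -> forall a, z a <= z x0.
Proof.
move=> Hz a; have [xm _ Hxm] := @arg_maxP _ _ V x0 predT z isT.
by rewrite (harmonic_max_connect Hz (fun v => Hxm v isT) (reach_x0 xm)); exact: Hxm.
Qed.

Lemma harmonic_rooted_const z : harmonic z -> forall a, z a = z x0.
Proof.
move=> Hz a; apply/le_anti; rewrite harmonic_rooted_max //=.
by rewrite -lerN2 (harmonic_rooted_max (harmonicN Hz)).
Qed.

End Rooted.
End Harmonic.

Lemma sum_enum_rank (V : finType) (M : nmodType) (G : 'I_#|V| -> M) :
  \sum_i G i = \sum_(v : V) G (enum_rank v).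
Proof. by rewrite (reindex enum_rank) //; apply: onW_bij; exact: enum_rank_bij. Qed.

Section Kinetic.
Variables (R : realFieldType) (V : finType) (n : nat).
Variables (E : rel V) (y : V -> 'rV[R]_n) (k : V -> V -> R).

(* The transpose of R_k, padded with the (zero) columns of non-sources. *)
Definition laplacian_mx : 'M[R]_#|V| :=
  \matrix_(j, i) Rk E k (enum_val i) (enum_val j).

Lemma laplacian_mxE j i : laplacian_mx j i = Rk E k (enum_val i) (enum_val j).
Proof. exact: mxE. Qed.

Lemma laplacian_coker_harmonic c :
  harmonic E k (fun v => cokermx laplacian_mx (enum_rank v) c).
Proof.
move=> j; have /matrixP/(_ (enum_rank j) c) := mulmx_coker laplacian_mx.
rewrite !mxE sum_enum_rank; apply: etrans; apply: eq_bigr => v _.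
by rewrite laplacian_mxE !enum_rankK.
Qed.

Lemma laplacian_row_combination_in_Kspace (x : 'rV[R]_#|V|) :
  \sum_v (x *m laplacian_mx) 0 (enum_rank v) *: y v \in Kspace E y k.
Proof.
have -> : \sum_v (x *m laplacian_mx) 0 (enum_rank v) *: y v =
          \sum_j x 0 j *: YRk_col E y k (enum_val j).
  under eq_bigr do rewrite mxE scaler_suml.
  rewrite exchange_big /=; apply: eq_bigr => j _.
  rewrite /YRk_col scaler_sumr; apply: eq_bigr => v _.
  by rewrite laplacian_mxE enum_rankK scalerA.
by apply: memv_suml => j _; rewrite memvZ // YRk_col_in_Kspace.
Qed.

Hypothesis E_irrefl : forall i, ~~ E i i.
Hypothesis k_pos : forall i j, E i j -> 0 < k i j.
Variable x0 : V.
Hypothesis reach_x0 : forall x, connect E x x0.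

Lemma zero_sum_sub_laplacian (u : 'rV[R]_#|V|) :
  \sum_i u 0 i = 0 -> (u <= laplacian_mx)%MS.
Proof.
move=> u0; rewrite submxE; apply/eqP/rowP => c; rewrite !mxE sum_enum_rank.
have Hz := harmonic_rooted_const E_irrefl k_pos reach_x0 (laplacian_coker_harmonic c).
under eq_bigr do rewrite Hz.
by rewrite -mulr_suml -sum_enum_rank u0 mul0r.
Qed.

Lemma diff_in_Kspace_rooted a b : y b - y a \in Kspace E y k.
Proof.
pose u : 'rV[R]_#|V| := \row_i
  ((if enum_val i == b then 1 else 0) - (if enum_val i == a then 1 else 0)).
have /submxP [x Hx] : (u <= laplacian_mx)%MS.
  apply: zero_sum_sub_laplacian; rewrite sum_enum_rank.
  under eq_bigr do rewrite mxE enum_rankK.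
  by rewrite sumrB -!big_mkcond !big_pred1_eq subrr.
have -> : y b - y a = \sum_v u 0 (enum_rank v) *: y v.
  under eq_bigr do rewrite mxE enum_rankK scalerBl
    !(fun_if (fun c => c *: y _)) scale1r scale0r.
  by rewrite sumrB -!big_mkcond !big_pred1_eq.
by rewrite Hx laplacian_row_combination_in_Kspace.
Qed.

End Kinetic.

Section Source.
Variables (R : realFieldType) (V : finType) (n : nat).
Variables (E : rel V) (y : V -> 'rV[R]_n) (k : V -> V -> R).
Hypothesis E_irrefl : forall i, ~~ E i i.
Hypothesis k_pos : forall i j, E i j -> 0 < k i j.
Variable c : V -> R.
Hypothesis c_pos : forall j, j \in Vs E -> 0 < c j.
Hypothesis c_ker : \sum_(j in Vs E) c j *: YRk_col E y k j = 0.

Definition Rk_c (i : V) : R := \sum_(j in Vs E) c j * Rk E k i j.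

Lemma sum_Rk_c_scale : \sum_i Rk_c i *: y i = 0.
Proof.
rewrite -[RHS]c_ker; under eq_bigr do rewrite scaler_suml.
rewrite exchange_big /=; apply: eq_bigr => j _.
by rewrite /YRk_col scaler_sumr; apply: eq_bigr => i _; rewrite scalerA.
Qed.

Lemma sum_Rk_c : \sum_i Rk_c i = 0.
Proof.
rewrite exchange_big big1 //= => j _.
by rewrite -mulr_sumr (sum_Rk k E_irrefl) mulr0.
Qed.

Lemma Rk_c_gt0 a b : E a b -> b \notin Vs E -> 0 < Rk_c b.
Proof.
move=> Eab Hb; have Ha : a \in Vs E by rewrite in_Vs; apply/existsP; exists b.
have Rk_ge0 j : j \in Vs E -> 0 <= c j * Rk E k b j.
  move=> Hj; apply: mulr_ge0; first exact: ltW (c_pos Hj).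
  rewrite /Rk; case: ifP => [Ejb | _]; first exact: ltW (k_pos Ejb).
  by case: eqP => [ebj | //]; move: Hb; rewrite ebj Hj.
rewrite /Rk_c (bigD1 a) //= ltr_wpDr //; last by rewrite /Rk Eab mulr_gt0 ?c_pos ?k_pos.
by apply: sumr_ge0 => j /andP [Hj _]; apply: Rk_ge0.
Qed.

Variable x0 : V.
Hypothesis nonsource_x0 : forall b, b \notin Vs E -> b = x0.

Lemma edge_in_Lspace a b : E a b -> y b - y a \in Lspace E y.
Proof.
move=> Eab; have Ha : a \in Vs E by rewrite in_Vs; apply/existsP; exists b.
have [Hb | Hb] := boolP (b \in Vs E); first exact: diff_in_Lspace.
have Hrel : \sum_i Rk_c i *: (y i - y a) = 0.
  under eq_bigr do rewrite scalerBr.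
  by rewrite sumrB -scaler_suml sum_Rk_c_scale sum_Rk_c scale0r subrr.
have Hrest : \sum_(i | i != b) Rk_c i *: (y i - y a) \in Lspace E y.
  apply: memv_suml => i Hib; apply: memvZ; apply: diff_in_Lspace => //.
  by apply: contraR Hib => /nonsource_x0 ->; rewrite (nonsource_x0 Hb).
have : Rk_c b *: (y b - y a) \in Lspace E y.
  by move: Hrel; rewrite (bigD1 b) //= => /eqP; rewrite addr_eq0 => /eqP ->; rewrite memvN.
move/(memvZ (Rk_c b)^-1); rewrite scalerA mulVf ?scale1r //.
by rewrite gt_eqF // (Rk_c_gt0 Eab Hb).
Qed.

End Source.

Unset Implicit Arguments.

Theorem lemma13 (R : realFieldType) (V : finType) (n : nat)
  (E : rel V) (y : V -> 'rV[R]_n) (k : V -> V -> R)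
  (Hsimple : forall i, ~~ E i i)
  (Hk : forall i j, E i j -> 0 < k i j)
  (Ht : tnum E = 1%N)
  (Hker : exists c : V -> R,
      (forall j, j \in Vs E -> 0 < c j) /\
      \sum_(j in Vs E) c j *: YRk_col E y k j = 0) :
  (Kspace E y k = Lspace E y /\ Lspace E y = Sspace E y) /\
  dependency E y = deficiency E y + (tnum' E)%:Z - 1.
Proof.
have [x0 [reach_x0 tscs_x0 terminal_x0]] := tnum1_root Ht.
have [c [c_pos c_ker]] := Hker.
have KS : (Kspace E y k <= Sspace E y)%VS.
  by apply/span_subvP => _ /mapP [j _ ->]; apply: YRk_col_in_Sspace.
have SK : (Sspace E y <= Kspace E y k)%VS.
  apply/span_subvP => _ /mapP [[a b] _ ->] /=.
  exact: (diff_in_Kspace_rooted y Hsimple Hk reach_x0).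
have LS : (Lspace E y <= Sspace E y)%VS.
  by apply/span_subvP => _ /mapP [[a b] _ ->] /=; apply: diff_in_Sspace_rooted reach_x0 b a.
have SL : (Sspace E y <= Lspace E y)%VS.
  apply/span_subvP => v /mapP [[a b]]; rewrite mem_enum => Eab -> /=.
  exact: (edge_in_Lspace Hsimple Hk c_pos c_ker (nonsource_root tscs_x0)).
have eKS : Kspace E y k = Sspace E y by apply: subv_anti; rewrite KS SK.
have eLS : Lspace E y = Sspace E y by apply: subv_anti; rewrite LS SL.
split; first by rewrite eKS eLS.
have := card_Vs_rooted tscs_x0 terminal_x0 Hsimple.
rewrite /dependency /deficiency eLS (nlink_rooted reach_x0).
lia.
Qed.
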